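(* Let $\mathcal T$ be a theory of $\mathsf{LGI}$, let $\alpha,\beta$ be basic expressions and $c,d\in[0,1]$, and assume every element of $\tau(\alpha,c)$ and of $\tau(\beta,d)$ is provable from $\mathcal T$ in $\mathsf{LGI}$. Then for $r\in[0,1]$: if $r<1-c+d$ then $\mathcal T\vdash_{\mathsf{LGI}}\alpha\Rightarrow_r\beta$, and if $r>1-c+d$ then $\mathcal T\vdash_{\mathsf{LGI}}\lnot(\alpha\Rightarrow_r\beta)$.
   Context: Fix a continuous t-norm $\odot$ on $[0,1]$ and let $c\oplus d = 1-((1-c)\odot(1-d))$. Write $c\odot_{\L} d=\max(c+d-1,0)$, $c\oplus_{\L} d=\min(c+d,1)$. Syntax of $\mathsf{LGI}$: countably many variables $\phi_0,\phi_1,\dots$ and constants $\bot,\top$. Basic expressions are built from variables and constants by binary $\land,\lor,\odot$ and unary $\sim$. A graded implication is written $\alpha\Rightarrow_c\beta$ with $\alpha,\beta$ basic expressions, $c\in[0,1]$. Formulas are built from graded implications by classical $\land,\lor,\lnot$; $\Phi\to\Psi$ abbreviates $\lnot\Phi\lor\Psi$. A theory is a set of formulas. For a basic expression $\alpha$ and $c\in[0,1]$, $\tau(\alpha,c)=\{\top\Rightarrow_t\alpha : t\in[0,1],\ t<c\}\cup\{\alpha\Rightarrow_{1-t}\bot : t\in[0,1],\ t>c\}$. Calculus $\mathsf{LGI}$: axioms are (i) all substitution instances (by graded implications) of classical propositional tautologies; (ii) for all basic expressions $\alpha,\beta,\gamma$ and $c,d\in[0,1]$: ($\land_1$) $(\alpha\Rightarrow_d\beta)\land(\alpha\Rightarrow_d\gamma)\to(\alpha\Rightarrow_d\beta\land\gamma)$;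 ($\land_2$) $\alpha\land\beta\Rightarrow_1\alpha$; ($\land_3$) $\alpha\land\beta\Rightarrow_1\beta$; ($\lor_1$) $(\alpha\Rightarrow_d\gamma)\land(\beta\Rightarrow_d\gamma)\to(\alpha\lor\beta\Rightarrow_d\gamma)$; ($\lor_2$) $\alpha\Rightarrow_1\alpha\lor\beta$; ($\lor_3$) $\beta\Rightarrow_1\alpha\lor\beta$; ($\odot_1$) $(\top\Rightarrow_c\alpha)\land(\top\Rightarrow_d\beta)\to(\top\Rightarrow_{c\odot d}\alpha\odot\beta)$; ($\odot_2$) $(\alpha\Rightarrow_c\bot)\land(\beta\Rightarrow_d\bot)\to(\alpha\odot\beta\Rightarrow_{c\oplus d}\bot)$; ($\odot_3$) $\top\Rightarrow_1\top\odot\top$; ($\sim_1$) $(\alpha\Rightarrow_d\beta)\to(\sim\beta\Rightarrow_d\sim\alpha)$; ($\sim_2$) $\sim\sim\alpha\Rightarrow_1\alpha$; ($\sim_3$) $\alpha\Rightarrow_1\sim\sim\alpha$; ($\top$) $\alpha\Rightarrow_1\top$; ($\bot$) $\bot\Rightarrow_1\alpha$; (0) $\alpha\Rightarrow_0\beta$; ($c$) $\alpha\Rightarrow_c\alpha$; (inkons) $\lnot(\top\Rightarrow_c\bot)$ for $c>0$; (trans$_1$) $(\alpha\Rightarrow_c\beta)\land(\beta\Rightarrow_d\gamma)\to(\alpha\Rightarrow_{c\odot_{\L}d}\gamma)$; (trans$_2$) $(\alpha\Rightarrow_c\bot)\land(\top\Rightarrow_d\beta)\to(\alpha\Rightarrow_{c\oplus_{\L}d}\beta)$;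 (lin$_1$) $(\alpha\Rightarrow_1\beta)\lor(\beta\Rightarrow_1\alpha)$; (lin$_2$) $(\top\Rightarrow_d\alpha)\lor(\alpha\Rightarrow_{1-d}\bot)$. The only rule is modus ponens. $\mathcal T\vdash_{\mathsf{LGI}}\Phi$ means $\Phi$ has a finite derivation from axioms and elements of $\mathcal T$ by modus ponens. *)

From Stdlib Require Import Reals.
Open Scope R_scope.

Definition in01 (x : R) : Prop := 0 <= x <= 1.

Definition is_cont_tnorm (tn : R -> R -> R) : Prop :=
  (forall x y, in01 x -> in01 y -> in01 (tn x y)) /\
  (forall x y, in01 x -> in01 y -> tn x y = tn y x) /\
  (forall x y z, in01 x -> in01 y -> in01 z -> tn x (tn y z) = tn (tn x y) z) /\
  (forall x y z, in01 x -> in01 y -> in01 z -> y <= z -> tn x y <= tn x z) /\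
  (forall x, in01 x -> tn x 1 = x) /\
  (forall x y, in01 x -> in01 y -> forall eps, eps > 0 -> exists delta, delta > 0 /\
     forall x' y', in01 x' -> in01 y' -> Rabs (x' - x) < delta -> Rabs (y' - y) < delta ->
       Rabs (tn x' y' - tn x y) < eps).

Definition tconorm (tn : R -> R -> R) (c d : R) : R := 1 - tn (1 - c) (1 - d).

Definition luk_tnorm (c d : R) : R := Rmax (c + d - 1) 0.
Definition luk_tconorm (c d : R) : R := Rmin (c + d) 1.

Inductive bexpr : Type :=
| BVar : nat -> bexpr
| BBot : bexpr
| BTop : bexpr
| BAnd : bexpr -> bexpr -> bexpr
| BOr : bexpr -> bexpr -> bexpr
| BOdot : bexpr -> bexpr -> bexpr
| BNeg : bexpr -> bexpr.

Inductive formula : Type :=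
| GImp : bexpr -> bexpr -> R -> formula
| FAnd : formula -> formula -> formula
| FOr : formula -> formula -> formula
| FNot : formula -> formula.

Definition FImp (P Q : formula) : formula := FOr (FNot P) Q.

Fixpoint wf (P : formula) : Prop :=
  match P with
  | GImp _ _ c => in01 c
  | FAnd P Q => wf P /\ wf Q
  | FOr P Q => wf P /\ wf Q
  | FNot P => wf P
  end.

Inductive pform : Type :=
| PVar : nat -> pform
| PAnd : pform -> pform -> pform
| POr : pform -> pform -> pform
| PNot : pform -> pform.

Fixpoint peval (v : nat -> bool) (p : pform) : bool :=
  match p with
  | PVar n => v n
  | PAnd p q => andb (peval v p) (peval v q)
  | POr p q => orb (peval v p) (peval v q)
  | PNot p => negb (peval v p)
  end.

Definition tautology (p : pform) : Prop := forall v, peval v p = true.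

Fixpoint psubst (s : nat -> bexpr * bexpr * R) (p : pform) : formula :=
  match p with
  | PVar n => let '(a, b, c) := s n in GImp a b c
  | PAnd p q => FAnd (psubst s p) (psubst s q)
  | POr p q => FOr (psubst s p) (psubst s q)
  | PNot p => FNot (psubst s p)
  end.

Inductive LGI_axiom (tn : R -> R -> R) : formula -> Prop :=
| ax_taut : forall p s, tautology p -> wf (psubst s p) -> LGI_axiom tn (psubst s p)
| ax_and1 : forall a b g d, in01 d ->
    LGI_axiom tn (FImp (FAnd (GImp a b d) (GImp a g d)) (GImp a (BAnd b g) d))
| ax_and2 : forall a b, LGI_axiom tn (GImp (BAnd a b) a 1)
| ax_and3 : forall a b, LGI_axiom tn (GImp (BAnd a b) b 1)
| ax_or1 : forall a b g d, in01 d ->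
    LGI_axiom tn (FImp (FAnd (GImp a g d) (GImp b g d)) (GImp (BOr a b) g d))
| ax_or2 : forall a b, LGI_axiom tn (GImp a (BOr a b) 1)
| ax_or3 : forall a b, LGI_axiom tn (GImp b (BOr a b) 1)
| ax_odot1 : forall a b c d, in01 c -> in01 d ->
    LGI_axiom tn (FImp (FAnd (GImp BTop a c) (GImp BTop b d)) (GImp BTop (BOdot a b) (tn c d)))
| ax_odot2 : forall a b c d, in01 c -> in01 d ->
    LGI_axiom tn (FImp (FAnd (GImp a BBot c) (GImp b BBot d))
                       (GImp (BOdot a b) BBot (tconorm tn c d)))
| ax_odot3 : LGI_axiom tn (GImp BTop (BOdot BTop BTop) 1)
| ax_neg1 : forall a b d, in01 d ->
    LGI_axiom tn (FImp (GImp a b d) (GImp (BNeg b) (BNeg a) d))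
| ax_neg2 : forall a, LGI_axiom tn (GImp (BNeg (BNeg a)) a 1)
| ax_neg3 : forall a, LGI_axiom tn (GImp a (BNeg (BNeg a)) 1)
| ax_top : forall a, LGI_axiom tn (GImp a BTop 1)
| ax_bot : forall a, LGI_axiom tn (GImp BBot a 1)
| ax_zero : forall a b, LGI_axiom tn (GImp a b 0)
| ax_refl : forall a c, in01 c -> LGI_axiom tn (GImp a a c)
| ax_inkons : forall c, in01 c -> c > 0 -> LGI_axiom tn (FNot (GImp BTop BBot c))
| ax_trans1 : forall a b g c d, in01 c -> in01 d ->
    LGI_axiom tn (FImp (FAnd (GImp a b c) (GImp b g d)) (GImp a g (luk_tnorm c d)))
| ax_trans2 : forall a b c d, in01 c -> in01 d ->
    LGI_axiom tn (FImp (FAnd (GImp a BBot c) (GImp BTop b d)) (GImp a b (luk_tconorm c d)))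
| ax_lin1 : forall a b, LGI_axiom tn (FOr (GImp a b 1) (GImp b a 1))
| ax_lin2 : forall a d, in01 d ->
    LGI_axiom tn (FOr (GImp BTop a d) (GImp a BBot (1 - d))).

Inductive provable (tn : R -> R -> R) (T : formula -> Prop) : formula -> Prop :=
| pr_ax : forall P, LGI_axiom tn P -> provable tn T P
| pr_hyp : forall P, T P -> provable tn T P
| pr_mp : forall P Q, provable tn T P -> provable tn T (FImp P Q) -> provable tn T Q.

Definition tau (a : bexpr) (c : R) (P : formula) : Prop :=
  (exists t, in01 t /\ t < c /\ P = GImp BTop a t) \/
  (exists t, in01 t /\ t > c /\ P = GImp a BBot (1 - t)).

(* For r < 1 - c + d, pick t slightly above c and s slightly below d: from
   α ⇒_{1-t} ⊥ and ⊤ ⇒_s β, (trans₂) gives α ⇒_{min(1-t+s,1)} β, and grades can be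
   lowered by (trans₁) against β ⇒ β.  For r > 1 - c + d, pick t slightly below c
   and s slightly above d: chaining ⊤ ⇒_t α, α ⇒_r β and β ⇒_{1-s} ⊥ by (trans₁)
   would yield ⊤ ⇒_g ⊥ with g ≥ t + r - s - 1 > 0, contradicting (inkons). *)
From Stdlib Require Import Reals Lra.
Open Scope R_scope.

Lemma luk_tnorm_in01 x y : in01 x -> in01 y -> in01 (luk_tnorm x y).
Proof. unfold in01, luk_tnorm, Rmax; intros; destruct (Rle_dec _ _); lra. Qed.

Lemma luk_tconorm_in01 x y : in01 x -> in01 y -> in01 (luk_tconorm x y).
Proof. unfold in01, luk_tconorm, Rmin; intros; destruct (Rle_dec _ _); lra. Qed.

Lemma luk_tnorm_ge x y : x + y - 1 <= luk_tnorm x y.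
Proof. apply Rmax_l. Qed.

Lemma luk_tnorm_eq x y : 1 <= x + y -> luk_tnorm x y = x + y - 1.
Proof. unfold luk_tnorm, Rmax; intros; destruct (Rle_dec _ _); lra. Qed.

Lemma luk_tconorm_ge x y z : z <= 1 -> z <= x + y -> z <= luk_tconorm x y.
Proof. unfold luk_tconorm, Rmin; intros; destruct (Rle_dec _ _); lra. Qed.

Lemma tconorm_in01 tn x y : is_cont_tnorm tn -> in01 x -> in01 y -> in01 (tconorm tn x y).
Proof.
  intros [tn01 _] hx hy; unfold tconorm, in01 in *.
  assert (h : in01 (tn (1 - x) (1 - y))) by (apply tn01; unfold in01; lra).
  unfold in01 in h; lra.
Qed.

Lemma psubst_wf s p : (forall n, in01 (snd (s n))) -> wf (psubst s p).
Proof.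
  intro hs; induction p as [n | p IHp q IHq | p IHp q IHq | p IHp]; simpl; auto.
  specialize (hs n); destruct (s n) as [[a b] x]; exact hs.
Qed.

Section LGI_derivations.

Variable tn : R -> R -> R.
Hypothesis Htn : is_cont_tnorm tn.
Variable T : formula -> Prop.
Hypothesis HT : forall P, T P -> wf P.

Lemma LGI_axiom_wf P : LGI_axiom tn P -> wf P.
Proof.
  assert (h1 : in01 1) by (unfold in01; lra).
  assert (h0 : in01 0) by (unfold in01; lra).
  pose proof Htn as [tn01 _].
  destruct 1; simpl; repeat match goal with |- _ /\ _ => split end;
    auto using luk_tnorm_in01, luk_tconorm_in01, tconorm_in01.
  unfold in01 in *; lra.
Qed.

Lemma provable_wf P : provable tn T P -> wf P.
Proof.
  induction 1 as [P hax | P hyp | P Q _ _ _ IHimp].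
  - exact (LGI_axiom_wf P hax).
  - exact (HT P hyp).
  - exact (proj2 IHimp).
Qed.

Lemma provable_tautology s p :
  tautology p -> (forall n, in01 (snd (s n))) -> provable tn T (psubst s p).
Proof. intros hp hs; apply pr_ax, ax_taut; auto using psubst_wf. Qed.

Definition pimp (p q : pform) : pform := POr (PNot p) q.

Definition subst3 (i j k : bexpr * bexpr * R) (n : nat) : bexpr * bexpr * R :=
  match n with 0%nat => i | 1%nat => j | _ => k end.

Lemma provable_tautology3 p a1 b1 x1 a2 b2 x2 a3 b3 x3 :
  tautology p -> in01 x1 -> in01 x2 -> in01 x3 ->
  provable tn T (psubst (subst3 (a1, b1, x1) (a2, b2, x2) (a3, b3, x3)) p).
Proof. intros hp h1 h2 h3; apply provable_tautology; auto; intros [|[|n]]; auto. Qed.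

Section And_rules.

Variables (a1 b1 a2 b2 a3 b3 : bexpr) (x1 x2 x3 : R).
Let P := GImp a1 b1 x1.
Let Q := GImp a2 b2 x2.
Let S := GImp a3 b3 x3.
Hypothesis hPQS : provable tn T (FImp (FAnd P Q) S).

Let grades01 : in01 x1 /\ in01 x2 /\ in01 x3.
Proof. destruct (provable_wf _ hPQS) as [[h1 h2] h3]; auto. Qed.

Lemma provable_and_mp : provable tn T P -> provable tn T Q -> provable tn T S.
Proof.
  intros hP hQ; destruct grades01 as (h1 & h2 & h3).
  assert (taut : tautology (pimp (pimp (PAnd (PVar 0) (PVar 1)) (PVar 2))
                                 (pimp (PVar 0) (pimp (PVar 1) (PVar 2))))).
  { intro v; simpl; destruct (v 0%nat), (v 1%nat), (v 2%nat); reflexivity. }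
  pose proof (provable_tautology3 _ a1 b1 x1 a2 b2 x2 a3 b3 x3 taut h1 h2 h3) as H.
  apply (pr_mp _ _ _ _ hQ), (pr_mp _ _ _ _ hP), (pr_mp _ _ _ _ hPQS), H.
Qed.

Lemma provable_and_mt_l :
  provable tn T (FNot S) -> provable tn T Q -> provable tn T (FNot P).
Proof.
  intros hS hQ; destruct grades01 as (h1 & h2 & h3).
  assert (taut : tautology (pimp (pimp (PAnd (PVar 0) (PVar 1)) (PVar 2))
                                 (pimp (PNot (PVar 2)) (pimp (PVar 1) (PNot (PVar 0)))))).
  { intro v; simpl; destruct (v 0%nat), (v 1%nat), (v 2%nat); reflexivity. }
  pose proof (provable_tautology3 _ a1 b1 x1 a2 b2 x2 a3 b3 x3 taut h1 h2 h3) as H.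
  apply (pr_mp _ _ _ _ hQ), (pr_mp _ _ _ _ hS), (pr_mp _ _ _ _ hPQS), H.
Qed.

Lemma provable_and_mt_r :
  provable tn T P -> provable tn T (FNot S) -> provable tn T (FNot Q).
Proof.
  intros hP hS; destruct grades01 as (h1 & h2 & h3).
  assert (taut : tautology (pimp (pimp (PAnd (PVar 0) (PVar 1)) (PVar 2))
                                 (pimp (PVar 0) (pimp (PNot (PVar 2)) (PNot (PVar 1)))))).
  { intro v; simpl; destruct (v 0%nat), (v 1%nat), (v 2%nat); reflexivity. }
  pose proof (provable_tautology3 _ a1 b1 x1 a2 b2 x2 a3 b3 x3 taut h1 h2 h3) as H.
  apply (pr_mp _ _ _ _ hS), (pr_mp _ _ _ _ hP), (pr_mp _ _ _ _ hPQS), H.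
Qed.

End And_rules.

Lemma provable_imp_le a b x y :
  provable tn T (GImp a b x) -> in01 y -> y <= x -> provable tn T (GImp a b y).
Proof.
  intros hx hy hyx.
  assert (hx01 : in01 x) by exact (provable_wf _ hx).
  assert (hz : in01 (1 - x + y)) by (unfold in01 in *; lra).
  replace y with (luk_tnorm x (1 - x + y)) by (rewrite luk_tnorm_eq; unfold in01 in *; lra).
  eapply provable_and_mp; [apply pr_ax, ax_trans1; auto | exact hx |].
  apply pr_ax, ax_refl; exact hz.
Qed.

Lemma provable_top_imp_of_tau b d s :
  (forall P, tau b d P -> provable tn T P) -> in01 s -> s < d \/ s = 0 ->
  provable tn T (GImp BTop b s).
Proof.
  intros hb hs [lt | ->].
  - apply hb; left; exists s; auto.
  - apply pr_ax, ax_zero.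
Qed.

Lemma provable_imp_bot_of_tau a c t :
  (forall P, tau a c P -> provable tn T P) -> in01 t -> c < t \/ t = 1 ->
  provable tn T (GImp a BBot (1 - t)).
Proof.
  intros ha ht [gt | ->].
  - apply ha; right; exists t; auto.
  - rewrite Rminus_diag; apply pr_ax, ax_zero.
Qed.

Variables (a b : bexpr) (c d : R).
Hypotheses (Hc : in01 c) (Hd : in01 d).
Hypothesis Ha : forall P, tau a c P -> provable tn T P.
Hypothesis Hb : forall P, tau b d P -> provable tn T P.

Lemma provable_imp_of_lt r : in01 r -> r < 1 - c + d -> provable tn T (GImp a b r).
Proof.
  intros hr hlt; unfold in01 in *.
  set (del := (1 - c + d - r) / 4).
  (* The clamped values t = 1 and s = 0 give grade 0, provable by axiom (0); they
     cover c = 1 and d = 0, where τ supplies nothing. *)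
  set (t := Rmin 1 (c + del)); set (s := Rmax 0 (d - del)).
  assert (ht : in01 t /\ (c < t \/ t = 1) /\ c + del >= t).
  { unfold t, Rmin, del, in01; destruct (Rle_dec _ _); lra. }
  assert (hs : in01 s /\ (s < d \/ s = 0) /\ d - del <= s).
  { unfold s, Rmax, del, in01; destruct (Rle_dec _ _); lra. }
  destruct ht as (ht01 & htc & htle), hs as (hs01 & hsd & hsge).
  assert (h1t : in01 (1 - t)) by (unfold in01 in *; lra).
  apply (provable_imp_le _ _ (luk_tconorm (1 - t) s)); [| unfold in01; lra |].
  - eapply provable_and_mp; [apply pr_ax, ax_trans2; auto | |].
    + apply (provable_imp_bot_of_tau a c); auto.
    + apply (provable_top_imp_of_tau b d); auto.
  - apply luk_tconorm_ge; unfold del in *; lra.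
Qed.

Lemma provable_not_imp_of_gt r : in01 r -> r > 1 - c + d -> provable tn T (FNot (GImp a b r)).
Proof.
  intros hr hgt; unfold in01 in *.
  set (del := (c - d - (1 - r)) / 3).
  set (t := c - del); set (s := d + del).
  assert (ht : in01 t) by (unfold in01, t, del; lra).
  assert (hs : in01 s) by (unfold in01, s, del; lra).
  assert (h1s : in01 (1 - s)) by (unfold in01 in *; lra).
  set (g := luk_tnorm t r).
  assert (hg : in01 g) by (apply luk_tnorm_in01; unfold in01; auto).
  assert (hbot : 0 < luk_tnorm g (1 - s)).
  { pose proof (luk_tnorm_ge t r); pose proof (luk_tnorm_ge g (1 - s)).
    unfold g, t, s, del in *; lra. }
  apply (provable_and_mt_r BTop a a b BTop b t r g); [apply pr_ax, ax_trans1; auto | |].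
  - apply Ha; left; exists t; repeat split; auto; unfold t, del; lra.
  - apply (provable_and_mt_l BTop b b BBot BTop BBot g (1 - s) (luk_tnorm g (1 - s)));
      [apply pr_ax, ax_trans1; auto | |].
    + apply pr_ax, ax_inkons; [apply luk_tnorm_in01 |]; auto.
    + apply Hb; right; exists s; repeat split; auto; unfold s, del; lra.
Qed.

End LGI_derivations.

Theorem mainTheorem4 (tn : R -> R -> R) (Htn : is_cont_tnorm tn)
  (T : formula -> Prop) (HT : forall P, T P -> wf P)
  (a b : bexpr) (c d : R) (Hc : in01 c) (Hd : in01 d)
  (Ha : forall P, tau a c P -> provable tn T P)
  (Hb : forall P, tau b d P -> provable tn T P)
  (r : R) (Hr : in01 r) :
  (r < 1 - c + d -> provable tn T (GImp a b r)) /\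
  (r > 1 - c + d -> provable tn T (FNot (GImp a b r))).
Proof.
  split; [apply provable_imp_of_lt | apply provable_not_imp_of_gt]; assumption.
Qed.
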